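(* There exists a pairwise-intersecting double-interval society with $8$ voters and approval number $3$. On the other hand, every double-$8$ string has diameter at least $3$, so every society obtained from a double-$8$ string (by the construction below) has approval number at least $4$.
   Context: A double-interval society consists of a finite set of $n$ voters, each voter $v$ having an approval set $A_v\subseteq\mathbb{R}$ that is the union of two disjoint bounded closed intervals; it is pairwise-intersecting if $A_u\cap A_v\ne\emptyset$ for all voters $u,v$. The approval number of the society is the maximum over $p\in\mathbb{R}$ of the number of voters $v$ with $p\in A_v$. A double-$n$ string is a string of length $2n$ over $n$ symbols with each symbol appearing exactly twice; the distance between two distinct symbols is the minimum absolute difference of positions of an occurrence of each, and the diameter is the maximum of these distances over all pairs of distinct symbols. From a double-$n$ string of diameter $d$ one builds a society by letting each symbol be a voter and assigning to each of the $2n$ entries a closed interval, all of equal width, placed in the order of the string with spacing such that each interval overlaps exactly the intervals of the $d$ entries on either side of it; such a society is pairwise-intersecting and has approval number $d+1$. *)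

From Stdlib Require Import Reals List Arith.
Import ListNotations.
Open Scope R_scope.

(* A voter's approval set [a,b] ∪ [c,d], encoded by (a,b,c,d). *)
Definition voter := (R * R * R * R)%type.

Definition approves (v : voter) (p : R) : Prop :=
  let '(a, b, c, d) := v in (a <= p <= b) \/ (c <= p <= d).

Definition double_interval (v : voter) : Prop :=
  let '(a, b, c, d) := v in a <= b /\ c <= d /\ (b < c \/ d < a).

Definition approvesb (v : voter) (p : R) : bool :=
  let '(a, b, c, d) := v in
  ((if Rle_dec a p then true else false) && (if Rle_dec p b then true else false))
  || ((if Rle_dec c p then true else false) && (if Rle_dec p d then true else false)).

Definition society := list voter.

Definition is_double_interval_society (S : society) : Prop :=
  forall v, In v S -> double_interval v.

Definition pairwise_intersecting (S : society) : Prop :=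
  forall u v, In u S -> In v S -> exists p, approves u p /\ approves v p.

Definition approval_count (S : society) (p : R) : nat :=
  length (filter (fun v => approvesb v p) S).

Definition is_approval_number (S : society) (k : nat) : Prop :=
  (exists p, approval_count S p = k) /\ (forall p, (approval_count S p <= k)%nat).

Close Scope R_scope.

Definition is_double_string (n : nat) (s : list nat) : Prop :=
  length s = 2 * n /\ (forall x, In x s -> x < n) /\
  (forall a, a < n -> count_occ Nat.eq_dec s a = 2).

Definition positions (s : list nat) (a : nat) : list nat :=
  filter (fun i => Nat.eqb (nth i s 0) a) (seq 0 (length s)).

Definition absdiff (i j : nat) : nat := (i - j) + (j - i).

(* distance between symbols a and b: minimal |i - j| over occurrences
   (the default length s is never attained when both symbols occur) *)
Definition str_dist (s : list nat) (a b : nat) : nat :=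
  fold_right Nat.min (length s)
    (flat_map (fun i => map (fun j => absdiff i j) (positions s b)) (positions s a)).

Definition diameter (n : nat) (s : list nat) : nat :=
  list_max (flat_map (fun a => map (fun b => if Nat.eqb a b then 0 else str_dist s a b)
                                   (seq 0 n)) (seq 0 n)).

(* The first claim is witnessed by an explicit society of eight voters whose
   intervals have integer endpoints; every check is a finite case analysis.

   For the second claim, look at the symbol [a] in the first position of a
   double-n string of diameter [d], and let [j] be the position of its second
   copy.  Every other symbol lies within distance [d] of one of the two copies
   of [a], hence occupies one of the [3 d] positions [1..d] and [j-d..j+d]
   minus [j].  So [n - 1 <= 3 d], and for [n = 8] this forces [d >= 3]. *)
From Stdlib Require Import Reals List Arith Lia Lra.
Import ListNotations.

Lemma positions_cons (x : nat) (s : list nat) (a : nat) :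
  positions (x :: s) a = (if Nat.eqb x a then [0] else []) ++ map S (positions s a).
Proof.
  unfold positions; cbn [length seq]; rewrite <- seq_shift; cbn [filter]; rewrite filter_map_swap; cbn.
  destruct (Nat.eqb x a); reflexivity.
Qed.

Lemma length_positions (s : list nat) (a : nat) :
  length (positions s a) = count_occ Nat.eq_dec s a.
Proof.
  induction s as [|x s IH]; [reflexivity|].
  rewrite positions_cons, length_app, length_map, IH; cbn.
  destruct (Nat.eq_dec x a) as [<-|ne]; [now rewrite Nat.eqb_refl|].
  now rewrite (proj2 (Nat.eqb_neq x a) ne).
Qed.

Lemma in_positions (s : list nat) (a i : nat) :
  In i (positions s a) <-> i < length s /\ nth i s 0 = a.
Proof. unfold positions; rewrite filter_In, in_seq, Nat.eqb_eq; lia. Qed.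

Lemma positions_pair (s : list nat) (a i0 : nat) :
  count_occ Nat.eq_dec s a = 2 -> In i0 (positions s a) ->
  exists j, forall i, In i (positions s a) -> i = i0 \/ i = j.
Proof.
  rewrite <- length_positions.
  destruct (positions s a) as [|x [|y [|z l]]]; try discriminate; intros _ Hi0.
  destruct Hi0 as [<-|[<-|[]]]; [exists y | exists x];
    intros i [<-|[<-|[]]]; auto.
Qed.

Lemma fold_right_min_In (d : nat) (l : list nat) :
  fold_right Nat.min d l < d -> In (fold_right Nat.min d l) l.
Proof.
  induction l as [|x l IH]; cbn; [lia|intros Hlt].
  destruct (Nat.min_spec x (fold_right Nat.min d l)) as [[_ ->]|[Hle Hmin]];
    [now left|rewrite Hmin in *; right; apply IH; lia].
Qed.

Lemma str_dist_attained (s : list nat) (a b : nat) :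
  str_dist s a b < length s ->
  exists i k, In i (positions s a) /\ In k (positions s b) /\
              absdiff i k = str_dist s a b.
Proof.
  unfold str_dist; intros Hlt.
  apply fold_right_min_In, in_flat_map in Hlt as [i [Hi Hk]].
  apply in_map_iff in Hk as [k [Hik Hk]]; eauto.
Qed.

Lemma In_le_list_max (l : list nat) (x : nat) : In x l -> x <= list_max l.
Proof.
  pose proof (proj1 (list_max_le l (list_max l)) (le_n _)) as Hall.
  rewrite Forall_forall in Hall; exact (Hall x).
Qed.

Lemma str_dist_le_diameter (n : nat) (s : list nat) (a b : nat) :
  a < n -> b < n -> a <> b -> str_dist s a b <= diameter n s.
Proof.
  intros Ha Hb Hab.
  assert (Hdist : (if Nat.eqb a b then 0 else str_dist s a b) = str_dist s a b)
    by now rewrite (proj2 (Nat.eqb_neq a b) Hab).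
  rewrite <- Hdist; unfold diameter; apply In_le_list_max.
  apply in_flat_map; exists a; split; [apply in_seq; lia|].
  apply in_map_iff; exists b; split; [reflexivity|apply in_seq; lia].
Qed.

(* When [j < d] the truncated [seq (j - d) d] starts at [0] and still covers
   every position below [j]. *)
Definition near_positions (j d : nat) : list nat :=
  seq 1 d ++ seq (j - d) d ++ seq (S j) d.

Lemma length_near_positions (j d : nat) : length (near_positions j d) = 3 * d.
Proof. unfold near_positions; rewrite !length_app, !length_seq; lia. Qed.

Lemma in_near_positions (i j k d : nat) :
  i = 0 \/ i = j -> k <> i -> absdiff i k <= d -> In k (near_positions j d).
Proof.
  unfold near_positions, absdiff; intros Hi Hki Hd.
  rewrite !in_app_iff, !in_seq; lia.
Qed.

Lemma double_string_diameter_bound (n : nat) (s : list nat) :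
  is_double_string n s -> n <= 1 + 3 * diameter n s.
Proof.
  intros [Hlen [Hsym Hcount]]; set (d := diameter n s).
  destruct (Nat.eq_dec n 0) as [->|Hn]; [lia|].
  destruct (Nat.le_gt_cases (length s) d) as [|Hd]; [lia|].
  set (a := nth 0 s 0).
  assert (Ha : a < n) by (apply Hsym, nth_In; lia).
  assert (H0 : In 0 (positions s a)) by (apply in_positions; split; [lia|reflexivity]).
  destruct (positions_pair s a 0 (Hcount a Ha) H0) as [j Hj].
  assert (Hnear : forall b, b < n -> b <> a ->
            In b (map (fun k => nth k s 0) (near_positions j d))).
  { intros b Hb Hba.
    pose proof (str_dist_le_diameter n s a b Ha Hb (not_eq_sym Hba)) as Hdist.
    destruct (str_dist_attained s a b) as [i [k [Hi [Hk Hik]]]]; [lia|].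
    apply in_positions in Hk as [_ Hkb].
    assert (Hia : nth i s 0 = a) by now apply in_positions in Hi.
    rewrite <- Hkb; apply (in_map (fun k => nth k s 0)), (in_near_positions i); [now apply Hj| |lia].
    intros ->; congruence. }
  assert (Hincl : incl (seq 0 n) (a :: map (fun k => nth k s 0) (near_positions j d))).
  { intros b Hb%in_seq.
    destruct (Nat.eq_dec b a) as [->|Hba]; [now left|right; apply Hnear; lia]. }
  apply NoDup_incl_length in Hincl; [|apply seq_NoDup].
  rewrite length_seq, length_cons, length_map, length_near_positions in Hincl; lia.
Qed.

Section Example.
Local Open Scope R_scope.

Definition example_society : society :=
  [ (0,0,2,6); (0,1,8,10); (0,2,11,13); (1,4,7,7);
    (3,3,10,13); (4,5,9,11); (5,8,12,12); (6,9,13,13) ].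

Local Ltac approve := unfold approves; first [left; lra | right; lra].

Local Ltac common_point :=
  solve [ exists 0; split; approve | exists 1; split; approve
        | exists 2; split; approve | exists 3; split; approve
        | exists 4; split; approve | exists 5; split; approve
        | exists 6; split; approve | exists 7; split; approve
        | exists 8; split; approve | exists 9; split; approve
        | exists 10; split; approve | exists 11; split; approve
        | exists 12; split; approve | exists 13; split; approve ].

Local Ltac decide_comparisons :=
  repeat (destruct (Rle_dec _ _); cbn; try (exfalso; lra)).

Lemma example_society_double_interval : is_double_interval_society example_society.
Proof.
  intros v Hv; cbn in Hv.
  repeat destruct Hv as [<-|Hv]; try contradiction; cbn; lra.
Qed.

Lemma example_society_pairwise_intersecting : pairwise_intersecting example_society.
Proof.
  intros u v Hu Hv; cbn in Hu, Hv.
  repeat destruct Hu as [<-|Hu]; try contradiction;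
  repeat destruct Hv as [<-|Hv]; try contradiction; common_point.
Qed.

Lemma example_society_approval_number : is_approval_number example_society 3.
Proof.
  split.
  - exists 0; unfold approval_count, example_society; cbn.
    decide_comparisons; reflexivity.
  - intros p; unfold approval_count, example_society; cbn.
    decide_comparisons; lia.
Qed.

End Example.

Theorem proposition5p1 :
  (exists S : society,
      length S = 8 /\ is_double_interval_society S /\
      pairwise_intersecting S /\ is_approval_number S 3) /\
  (forall s : list nat, is_double_string 8 s -> 3 <= diameter 8 s).
Proof.
  split.
  - exists example_society.
    split; [reflexivity|].
    split; [exact example_society_double_interval|].
    split; [exact example_society_pairwise_intersecting|].
    exact example_society_approval_number.
  - intros s Hs; pose proof (double_string_diameter_bound 8 s Hs); lia.
Qed.
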